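(* Let $\phi:T_1\times\cdots\times T_k\to T$ be a multi-valued logic gate with Fourier series expansion $\overline{\phi}$. If $\mathrm{cs}(\overline{\phi})=N(\overline{\phi})$, then $\overline{\phi}$ is one-to-one on the interior of $\Delta^{n_1-1}\times\cdots\times\Delta^{n_k-1}$.
   Context: Standard simplex: $\Delta^{m}=\{(t_0,\dots,t_m)\in\mathbb{R}^{m+1}: t_i\ge 0,\ \sum_i t_i=1\}$. For $0\le j\le m$, $\Delta^m_j=\{(t_0,\dots,\widehat{t_j},\dots,t_m): (t_0,\dots,t_m)\in\Delta^m,\ t_j\neq 0\}\subseteq\mathbb{R}^m$ (the hat means the coordinate is omitted). Multi-valued logic gate: $k\ge1$; for $i=1,\dots,k$ a finite set $T_i=\{w(i,0),\dots,w(i,n_i-1)\}$ with $n_i$ elements; a finite set $T=\{v_1,\dots,v_n\}\subset\mathbb{R}^m$; and a function $\phi:T_1\times\cdots\times T_k\to T$. Its Fourier series expansion is $\overline{\phi}:\Delta^{n_1-1}\times\cdots\times\Delta^{n_k-1}\to\mathbb{R}^m$, $\overline{\phi}\big((t_{1,j})_{j=0}^{n_1-1},\dots,(t_{k,j})_{j=0}^{n_k-1}\big)=\sum_{(j_1,\dots,j_k)}\Big(\prod_{s=1}^k t_{s,j_s}\Big)\,\phi(w(1,j_1),\dots,w(k,j_k))$, the sum over all $0\le j_s\le n_s-1$. Put $N=N(\overline{\phi})=n_1+\cdots+n_k-k$. For $z=(w(1,j(z,1)),\dots,w(k,j(z,k)))\in T_1\times\cdots\times T_k$: $C(\overline{\phi},z)=\Delta^{n_1-1}_{j(z,1)}\times\cdots\times\Delta^{n_k-1}_{j(z,k)}\subseteq\mathbb{R}^N$,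 and $f_z:\mathbb{R}^N\to\mathbb{R}^m$ is the polynomial map in the variables $t_{i,j}$ ($1\le i\le k$, $0\le j\le n_i-1$, $j\neq j(z,i)$, ordered lexicographically by $(i,j)$) obtained from the multilinear polynomial formula for $\overline{\phi}$ by substituting $t_{i,j(z,i)}=1-\sum_{0\le j\le n_i-1,\,j\neq j(z,i)}t_{i,j}$. Sign conventions: $\mathrm{sgn}(x)\in\{+1,0,-1\}$ is the usual sign. For $g:\mathbb{R}^N\to\mathbb{R}$ and nonempty $C$, $\mathrm{sign}_C(g)=+1$, $0$, $-1$ if $g>0$, $g=0$, $g<0$ on all of $C$ respectively, and $u$ (formal symbol) otherwise; for differentiable $g$, $\mathrm{Sign}_C(g)=(\mathrm{sign}_C(\partial g/\partial x_1),\dots,\mathrm{sign}_C(\partial g/\partial x_N))$. $S_N$: the set of nonzero $s\in\{-1,0,1\}^N$ whose first nonzero entry is $1$. A tuple $t\in\{1,0,-1,u\}^N$ eliminates $s\in S_N$ if (i) $t_i\ne0$ and $s_i\neq0$ for some $i$; (ii) there is $k\in\{\pm1\}$ with $t_i=ks_i$ whenever $s_i\neq0$ and $t_i\neq0$; (iii) $s_i=0$ whenever $t_i=u$. For a set $X$ of such tuples, $\mathrm{Elim}(X)$ is the set of elements of $S_N$ eliminated by some element of $X$. For convex $C\subseteq\mathbb{R}^N$ and differentiable $f:\mathbb{R}^N\to\mathbb{R}^m$, $\mathrm{Sens}_C(f)$ is the set of $v\in S_N$ such that $\mathrm{Sign}_C(\pi\circ f)$ eliminates $v$ for some differentiable $\pi:\mathbb{R}^m\to\mathbb{R}$.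 Continuous sensitivity: $\mathrm{cs}(\overline{\phi},z)=\log_3\big(3^{N}-2\,|\mathrm{Elim}(S_N\setminus\mathrm{Sens}_{C(\overline{\phi},z)}(f_z))|\big)$ and $\mathrm{cs}(\overline{\phi})=\max_{z\in T_1\times\cdots\times T_k}\mathrm{cs}(\overline{\phi},z)$. *)

From Stdlib Require Import Reals ClassicalEpsilon.
From HB Require Import structures.
From mathcomp Require Import all_boot.
Set Implicit Arguments. Unset Strict Implicit. Unset Printing Implicit Defensive.

Local Open Scope R_scope.

Definition pbool (P : Prop) : bool :=
  if excluded_middle_informative P then true else false.

Inductive sign4 := SPos | SZero | SNeg | SU.

Definition sign4_to_nat (s : sign4) : nat :=
  match s with SPos => 0 | SZero => 1 | SNeg => 2 | SU => 3 end.
Definition nat_to_sign4 (n : nat) : sign4 :=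
  match n with 0 => SPos | 1 => SZero | 2 => SNeg | _ => SU end.
Lemma sign4_natK : cancel sign4_to_nat nat_to_sign4.
Proof. by case. Qed.
HB.instance Definition _ := Countable.copy sign4 (can_type sign4_natK).
Definition sign4_enum := [:: SPos; SZero; SNeg; SU].
Lemma sign4_enumP : Finite.axiom sign4_enum.
Proof. by case. Qed.
HB.instance Definition _ := isFinite.Build sign4 sign4_enumP.

(* k * s for k in {+1,-1} (b = true means k = +1). *)
Definition smul (b : bool) (s : sign4) : sign4 :=
  if b then s else match s with SPos => SNeg | SNeg => SPos | _ => s end.

(* A gate with k inputs, T_i = {w(i,0),...,w(i,n_i-1)} encoded by indices
   'I_(n i), values in R^m = ('I_m -> R).  An input z is an index tuple. *)
Definition itup (k : nat) (n : 'I_k -> nat) := {dffun forall i : 'I_k, 'I_(n i)}.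

Definition bpoint (k : nat) (n : 'I_k -> nat) := forall i : 'I_k, 'I_(n i) -> R.

(* Fourier series expansion  phibar (as a polynomial map, for any reals t) *)
Definition phibar (k : nat) (n : 'I_k -> nat) (m : nat)
  (phi : itup n -> 'I_m -> R) (t : bpoint n) : 'I_m -> R :=
  fun c => \big[Rplus/0]_(j : itup n)
             ((\big[Rmult/1]_(s < k) t s (j s)) * phi j c).

Definition Nof (k : nat) (n : 'I_k -> nat) : nat := ((\sum_(i < k) n i) - k)%N.

(* Interior of Delta^{n_1-1} x ... x Delta^{n_k-1} (relative interior). *)
Definition in_interior (k : nat) (n : 'I_k -> nat) (t : bpoint n) : Prop :=
  (forall i j, 0 < t i j) /\ (forall i, \big[Rplus/0]_(j < n i) t i j = 1).

(* Coordinates of R^N: variables t_{i,j}, j <> j(z,i), ordered lexicographically.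
   Block i starts at offset  sum_{i' < i} (n_{i'} - 1). *)
Definition offs (k : nat) (n : 'I_k -> nat) (i : 'I_k) : nat :=
  (\sum_(i' < k | (i' < i)%N) (n i' - 1))%N.
Definition cidx (k : nat) (n : 'I_k -> nat) (z : itup n) (i : 'I_k) (j : 'I_(n i)) : nat :=
  (offs n i + (if (j < z i)%N then nat_of_ord j else (nat_of_ord j).-1))%N.
Definition xat (N : nat) (x : 'I_N -> R) (c : nat) : R :=
  match @insub nat (fun c => (c < N)%N) 'I_N c with Some c' => x c' | None => 0 end.

Definition expand (k : nat) (n : 'I_k -> nat) (z : itup n) (x : 'I_(Nof n) -> R)
  : bpoint n :=
  fun i j => if j == z i
             then 1 - \big[Rplus/0]_(j' < n i | j' != z i) xat x (cidx z j')
             else xat x (cidx z j).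

Arguments expand {k n} z x i j.

Definition f_z (k : nat) (n : 'I_k -> nat) (m : nat) (phi : itup n -> 'I_m -> R)
  (z : itup n) (x : 'I_(Nof n) -> R) : 'I_m -> R := phibar phi (expand z x).

Definition Cset (k : nat) (n : 'I_k -> nat) (z : itup n) (x : 'I_(Nof n) -> R) : Prop :=
  (forall i j, 0 <= expand z x i j) /\
  (forall i, \big[Rplus/0]_(j < n i) expand z x i j = 1) /\
  (forall i, expand z x i (z i) <> 0).

Definition upd (N : nat) (x : 'I_N -> R) (c : 'I_N) (h : R) : 'I_N -> R :=
  fun c' => if c' == c then h else x c'.

Definition pderiv (N : nat) (g : ('I_N -> R) -> R) (x : 'I_N -> R) (c : 'I_N) (l : R) : Prop :=
  derivable_pt_lim (fun h => g (upd x c h)) (x c) l.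

Definition supnorm (N : nat) (h : 'I_N -> R) : R := \big[Rmax/0]_(i < N) Rabs (h i).

Definition differentiable (M : nat) (pi : ('I_M -> R) -> R) : Prop :=
  forall y : 'I_M -> R, exists a : 'I_M -> R,
    forall eps, 0 < eps -> exists delta, 0 < delta /\
      forall h : 'I_M -> R, supnorm h < delta ->
        Rabs (pi (fun i => y i + h i) - pi y - \big[Rplus/0]_(i < M) (a i * h i))
          <= eps * supnorm h.

Definition signC (N : nat) (C : ('I_N -> R) -> Prop) (g : ('I_N -> R) -> R) (c : 'I_N)
  : sign4 :=
  if pbool (forall x, C x -> exists l, pderiv g x c l /\ 0 < l) then SPos
  else if pbool (forall x, C x -> pderiv g x c 0) then SZero
  else if pbool (forall x, C x -> exists l, pderiv g x c l /\ l < 0) then SNeg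
  else SU.

Definition SignC (N : nat) (C : ('I_N -> R) -> Prop) (g : ('I_N -> R) -> R)
  : 'I_N -> sign4 := fun c => signC C g c.

Definition S_N (N : nat) : {set {ffun 'I_N -> sign4}} :=
  [set s : {ffun 'I_N -> sign4} |
    [&& [forall i, s i != SU], [exists i, s i != SZero] &
        [forall i, ((s i != SZero) && [forall i' : 'I_N, (i' < i)%N ==> (s i' == SZero)])
                     ==> (s i == SPos)]]].

Definition eliminates (N : nat) (t s : 'I_N -> sign4) : Prop :=
  (exists i, t i <> SZero /\ s i <> SZero) /\
  (exists b : bool, forall i, s i <> SZero -> t i <> SZero -> t i = smul b (s i)) /\
  (forall i, t i = SU -> s i = SZero).

Definition Elim (N : nat) (X : {set {ffun 'I_N -> sign4}}) : {set {ffun 'I_N -> sign4}} :=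
  [set s in S_N N | pbool (exists t, t \in X /\ eliminates t s)].

Definition Sens (N M : nat) (C : ('I_N -> R) -> Prop) (f : ('I_N -> R) -> ('I_M -> R))
  : {set {ffun 'I_N -> sign4}} :=
  [set v in S_N N | pbool (exists pi : ('I_M -> R) -> R,
                              differentiable pi /\ eliminates (SignC C (fun x => pi (f x))) v)].

Definition log3 (x : R) : R := ln x / ln 3.

Definition cs_z (k : nat) (n : 'I_k -> nat) (m : nat) (phi : itup n -> 'I_m -> R)
  (z : itup n) : R :=
  log3 (3 ^ Nof n
        - 2 * INR #|Elim (S_N (Nof n) :\: Sens (@Cset k n z) (f_z phi z))|).

(* cs(phibar) = max over z (all cs(phibar,z) are >= 0, so 0 is a neutral start) *)
Definition cs (k : nat) (n : 'I_k -> nat) (m : nat) (phi : itup n -> 'I_m -> R) : R :=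
  \big[Rmax/0]_(z : itup n) cs_z phi z.

From Stdlib Require Import Reals Lra Lia FunctionalExtensionality ClassicalEpsilon Classical.
From HB Require Import structures.
From mathcomp Require Import all_boot zify.
Set Implicit Arguments. Unset Strict Implicit. Unset Printing Implicit Defensive.
Local Open Scope R_scope.

(* Suppose cs = N, so that some z has every sign vector of S_N sensitive.
   Two interior points t <> t' have charts x <> x' in R^N; normalise the sign
   vector v of x' - x (times the sign of the first nonzero entry) into S_N.
   Some pi eliminates v: on C(z) every partial derivative of g = pi o f_z has
   constant sign, compatible with v up to a global sign.  Walk from x down to
   min(x, x') and then up to x', one coordinate at a time; the path stays in
   C(z), and by the mean value theorem every step changes g in the same
   direction, strictly at the coordinate witnessing the elimination.  Hence
   g x <> g x', so phibar t <> phibar t'. *)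

HB.instance Definition _ := Monoid.isComLaw.Build R 0 Rplus
  (fun a b c => esym (Rplus_assoc a b c)) Rplus_comm Rplus_0_l.

Lemma pboolP (P : Prop) : reflect P (pbool P).
Proof. by rewrite /pbool; case: excluded_middle_informative => h; constructor. Qed.

Lemma Rsum_le (I : finType) (P : pred I) (F G : I -> R) :
  (forall i, P i -> F i <= G i) ->
  \big[Rplus/0]_(i | P i) F i <= \big[Rplus/0]_(i | P i) G i.
Proof. by move=> FG; apply: (big_ind2 (fun a b => a <= b)); [lra|move=> *; lra|]. Qed.

Section Chart.

Variables (k : nat) (n : 'I_k -> nat) (z : itup n).

Lemma offs_lt (i i' : 'I_k) : (i' < i)%N -> (offs n i' + (n i' - 1) <= offs n i)%N.
Proof.
move=> lt_i'i; rewrite /offs [X in (_ <= X)%N](bigD1 i') //= addnC leq_add2l.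
rewrite big_mkcond [X in (_ <= X)%N]big_mkcond /=; apply: leq_sum => i'' _.
case: ifP => // lt_i''i'; rewrite (ltn_trans lt_i''i' lt_i'i) /=.
by case: eqP => [E|//]; move: lt_i''i'; rewrite E ltnn.
Qed.

Lemma offs_le_sum (i : 'I_k) : (offs n i + (n i - 1) <= \sum_(i' < k) (n i' - 1))%N.
Proof.
rewrite /offs [X in (_ <= X)%N](bigD1 i) //= [X in (_ <= X)%N]addnC leq_add2r.
rewrite big_mkcond [X in (_ <= X)%N]big_mkcond /=; apply: leq_sum => i' _.
by case: ifP => // lt_i'i; case: eqP => [E|//]; move: lt_i'i; rewrite E ltnn.
Qed.

Lemma Nof_sum_pred : (forall i, 0 < n i)%N -> Nof n = (\sum_(i < k) (n i - 1))%N.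
Proof.
move=> n_gt0; rewrite /Nof.
have -> : (\sum_(i < k) n i = \sum_(i < k) (n i - 1) + \sum_(i < k) 1)%N.
  by rewrite -big_split /=; apply: eq_bigr => i _; rewrite subnK.
by rewrite sum1_card card_ord addnK.
Qed.

Definition block_pos (i : 'I_k) (j : 'I_(n i)) : nat :=
  if (j < z i)%N then nat_of_ord j else (nat_of_ord j).-1.

Lemma block_pos_lt i (j : 'I_(n i)) : j != z i -> (block_pos j < n i - 1)%N.
Proof.
move=> /eqP ne; have := ltn_ord j; have := ltn_ord (z i).
have : nat_of_ord j <> nat_of_ord (z i) by move/val_inj.
by rewrite /block_pos; case: ifP => /=; lia.
Qed.

Lemma block_pos_inj i (j j' : 'I_(n i)) :
  j != z i -> j' != z i -> block_pos j = block_pos j' -> j = j'.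
Proof.
move=> /eqP ne /eqP ne'.
have : nat_of_ord j <> nat_of_ord (z i) by move/val_inj.
have : nat_of_ord j' <> nat_of_ord (z i) by move/val_inj.
rewrite /block_pos => ? ? E; apply: val_inj => /=; move: E.
by case: ifP => /= ?; case: ifP => /= ?; lia.
Qed.

Lemma cidx_lt i (j : 'I_(n i)) : j != z i -> (cidx z j < Nof n)%N.
Proof.
move=> ne; rewrite Nof_sum_pred; last by move=> i'; exact: leq_ltn_trans (ltn_ord (z i')).
apply: leq_trans (offs_le_sum i); rewrite ltn_add2l; exact: block_pos_lt.
Qed.

Lemma cidx_neq i i' (j : 'I_(n i)) (j' : 'I_(n i')) :
  j != z i -> j' != z i' -> i != i' -> cidx z j != cidx z j'.
Proof.
move=> ne ne' /eqP nii'; rewrite /cidx -!/(block_pos _).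
have [lt|lt|/val_inj //] := ltngtP i i'.
- by have := offs_lt lt; have := block_pos_lt ne; move=> *; apply/eqP; lia.
- by have := offs_lt lt; have := block_pos_lt ne'; move=> *; apply/eqP; lia.
Qed.

(* [chart t c = t i j] for the unique [j <> z i] with [cidx z j = c]: the inverse of
   [expand z] on the interior. *)
Definition chart (t : bpoint n) : 'I_(Nof n) -> R :=
  fun c => \big[Rplus/0]_(i < k) \big[Rplus/0]_(j < n i | j != z i)
             (if (cidx z j == nat_of_ord c)%N then t i j else 0).

Lemma xat_ord N (x : 'I_N -> R) (c : 'I_N) : xat x (nat_of_ord c) = x c.
Proof. by rewrite /xat valK. Qed.

Lemma chart_cidx t i (j : 'I_(n i)) : j != z i -> xat (chart t) (cidx z j) = t i j.
Proof.
move=> ne; rewrite -[cidx z j]/(nat_of_ord (Ordinal (cidx_lt ne))) xat_ord.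
rewrite /chart (bigD1 i) //= (bigD1 j) //= eqxx.
rewrite big1 => [|j' /andP [ne' nej]]; last first.
  case: ifP => // /eqP E; move: nej; rewrite (block_pos_inj ne' ne) ?eqxx //.
  by move: E; rewrite /cidx -!/(block_pos _) /=; lia.
rewrite (big1 _ (fun i' => i' != i)) => [|i' nei]; first by rewrite Rplus_0_r Rplus_0_r.
apply: big1 => j' ne'; case: ifP => // E.
by move: (cidx_neq ne' ne nei); rewrite E.
Qed.

Lemma chart_ge0 t c : in_interior t -> 0 <= chart t c.
Proof.
move=> [t_gt0 _]; apply: (big_ind (fun y => 0 <= y)) => [|a b|i _]; try lra.
apply: (big_ind (fun y => 0 <= y)) => [|a b|j _]; try lra.
by case: ifP => _; [apply: Rlt_le|lra].
Qed.

Lemma sum_pivot (t : bpoint n) i :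
  \big[Rplus/0]_(j < n i) t i j = t i (z i) + \big[Rplus/0]_(j < n i | j != z i) t i j.
Proof. exact: bigD1. Qed.

Lemma expand_chart t : in_interior t -> forall i j, expand z (chart t) i j = t i j.
Proof.
move=> [_ t_sum] i j; rewrite /expand; case: eqP => [->|/eqP ne]; last exact: chart_cidx.
rewrite (eq_bigr (t i)) => [|j' ne']; last by rewrite chart_cidx.
by have := t_sum i; rewrite (sum_pivot t) => <-; exact: Rplus_minus_r.
Qed.

(* Shrinking the chart coordinates of an interior point stays inside C(phibar, z):
   the pivot coordinates only grow. *)
Lemma Cset_box t (q : 'I_(Nof n) -> R) :
  in_interior t -> (forall c, 0 <= q c <= chart t c) -> Cset z q.
Proof.
move=> [t_gt0 t_sum] q_box.
have pivot_gt0 i : 0 < expand z q i (z i).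
  rewrite /expand eqxx.
  have pivot_sum := t_sum i; rewrite (sum_pivot t) in pivot_sum.
  suff : \big[Rplus/0]_(j < n i | j != z i) xat q (cidx z j) <=
         \big[Rplus/0]_(j < n i | j != z i) t i j.
    move: pivot_sum (t_gt0 i (z i)).
    (* lra would not identify the two syntactically different copies of this sum *)
    by move: (\big[Rplus/0]_(j < n i | j != z i) t i j) => B; lra.
  apply: Rsum_le => j ne; rewrite -(chart_cidx t ne).
  rewrite -[cidx z j]/(nat_of_ord (Ordinal (cidx_lt ne))) !xat_ord.
  by have := q_box (Ordinal (cidx_lt ne)); lra.
split; [|split].
- move=> i j; have [->|ne] := eqVneq j (z i); first by have := pivot_gt0 i; lra.
  rewrite /expand (negbTE ne) /xat; case: insub => [c|]; [by have := q_box c; lra|lra].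
- move=> i; rewrite (sum_pivot (expand z q)) /expand eqxx.
  rewrite [X in _ + X = _](eq_bigr (fun j => xat q (cidx z j))) => [|j ne].
    by rewrite Rplus_comm; exact: Rplus_minus.
  by rewrite (negbTE ne).
- by move=> i; have := pivot_gt0 i; lra.
Qed.

End Chart.

Lemma interior_n_gt0 k (n : 'I_k -> nat) (t : bpoint n) :
  in_interior t -> forall i, (0 < n i)%N.
Proof.
move=> [_ t_sum] i; rewrite lt0n; apply/eqP => n0.
by move: (t_sum i); move: (t i); rewrite n0 => ti; rewrite big_ord0; lra.
Qed.

Lemma mvt_lt (f : R -> R) (Q : R -> Prop) a b :
  a < b -> (forall s, a <= s <= b -> exists l, derivable_pt_lim f s l /\ Q l) ->
  exists l, f b - f a = l * (b - a) /\ Q l.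
Proof.
move=> ab df.
pose f' s := epsilon (inhabits 0) (fun l => derivable_pt_lim f s l /\ Q l).
have f'P s : a <= s <= b -> derivable_pt_lim f s (f' s) /\ Q (f' s).
  by move=> hs; exact: epsilon_spec (df s hs).
have [s [-> hs]] := MVT_cor2 f f' a b ab (fun s hs => proj1 (f'P s hs)).
by exists (f' s); split => //; apply: (proj2 (f'P s _)); lra.
Qed.

Lemma mvt_between (f : R -> R) (Q : R -> Prop) a b :
  (forall s, Rmin a b <= s <= Rmax a b -> exists l, derivable_pt_lim f s l /\ Q l) ->
  exists l, f b - f a = l * (b - a) /\ Q l.
Proof.
move=> df; have [ab|[ab|ba]] := Rtotal_order a b.
- by apply: mvt_lt => // s hs; apply: df; rewrite Rmin_left ?Rmax_right; lra.
- have [l [_ Ql]] := df a (conj (Rmin_l a b) (Rmax_l a b)).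
  by exists l; split => //; rewrite ab; ring.
- have [l [E Ql]] : exists l, f a - f b = l * (a - b) /\ Q l.
    by apply: mvt_lt => // s hs; apply: df; rewrite Rmin_right ?Rmax_left; lra.
  by exists l; split => //; lra.
Qed.

Lemma upd_upd N (p : 'I_N -> R) c s h : upd (upd p c s) c h = upd p c h.
Proof. by apply: functional_extensionality => c'; rewrite /upd; case: eqP. Qed.

Lemma upd_same N (p : 'I_N -> R) c s : upd p c s c = s.
Proof. by rewrite /upd eqxx. Qed.

Lemma pderiv_upd N (g : ('I_N -> R) -> R) p c s l :
  pderiv g (upd p c s) c l -> derivable_pt_lim (fun h => g (upd p c h)) s l.
Proof.
rewrite /pderiv upd_same; congr derivable_pt_lim.
by apply: functional_extensionality => h; rewrite upd_upd.
Qed.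

Definition sval (s : sign4) : R :=
  match s with SPos => 1 | SNeg => -1 | _ => 0 end.

Definition sgn4 (r : R) : sign4 :=
  if Rlt_dec 0 r then SPos else if Rlt_dec r 0 then SNeg else SZero.

Definition bsign (b : bool) : R := if b then 1 else -1.

Lemma sgn4_pos r : 0 < r -> sgn4 r = SPos.
Proof. by rewrite /sgn4; case: Rlt_dec. Qed.

Lemma sgn4_eq0 r : sgn4 r = SZero <-> r = 0.
Proof.
rewrite /sgn4; case: Rlt_dec => h1; first by split => // r0; lra.
by case: Rlt_dec => h2; split => // r0; lra.
Qed.

Lemma sgn4_neqU r : sgn4 r != SU.
Proof. by rewrite /sgn4; case: Rlt_dec => //; case: Rlt_dec. Qed.

Lemma sval_sgn4_mul_gt0 r : r <> 0 -> 0 < sval (sgn4 r) * r.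
Proof.
rewrite /sgn4; case: Rlt_dec => /= h1 nz; first lra.
case: Rlt_dec => /= h2; lra.
Qed.

Lemma sval_smul b s : sval (smul b s) = bsign b * sval s.
Proof. by case: b; case: s => /=; ring. Qed.

Lemma signC_pderiv N (C : ('I_N -> R) -> Prop) g c :
  signC C g c <> SU ->
  forall x, C x -> exists mu, 0 < mu /\ pderiv g x c (mu * sval (signC C g c)).
Proof.
rewrite /signC.
case: pboolP => [pos _ x Cx|_].
  by have [l [dl l_gt0]] := pos x Cx; exists l; rewrite /= Rmult_1_r.
case: pboolP => [zero _ x Cx|_]; first by exists 1; rewrite /= Rmult_0_r; split; [lra|exact: zero].
case: pboolP => [neg _ x Cx|//].
have [l [dl l_lt0]] := neg x Cx; exists (- l); split; first lra.
by rewrite /= Rmult_opp_opp Rmult_1_r.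
Qed.

Lemma coordinate_step N (C : ('I_N -> R) -> Prop) g (p : 'I_N -> R) c a b :
  signC C g c <> SU -> (forall s, Rmin a b <= s <= Rmax a b -> C (upd p c s)) ->
  exists mu, 0 < mu /\
    g (upd p c b) - g (upd p c a) = mu * sval (signC C g c) * (b - a).
Proof.
move=> T_neqU seg_in_C.
have [l [-> [mu [mu_gt0 ->]]]] : exists l, g (upd p c b) - g (upd p c a) = l * (b - a) /\
    exists mu, 0 < mu /\ l = mu * sval (signC C g c).
  apply: (mvt_between (f := fun h => g (upd p c h))).
  move=> s /seg_in_C /(signC_pderiv T_neqU) [mu [mu_gt0 dl]].
  by exists (mu * sval (signC C g c)); split; [exact: pderiv_upd|exists mu].
by exists mu.
Qed.

Lemma split_at_min (a a' s mu1 mu2 : R) : 0 < mu1 -> 0 < mu2 ->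
  exists mu, 0 < mu /\
    mu1 * s * (Rmin a a' - a) + mu2 * s * (a' - Rmin a a') = mu * s * (a' - a).
Proof.
rewrite /Rmin; case: Rle_dec => _ mu1_gt0 mu2_gt0.
- by exists mu2; split => //; ring.
- by exists mu1; split => //; ring.
Qed.

Lemma nondecreasing_le (F : nat -> R) (N a b : nat) :
  (forall r, (r < N)%N -> F r <= F r.+1) -> (a <= b)%N -> (b <= N)%N -> F a <= F b.
Proof.
move=> incr ab bN; elim: b ab bN => [|b IH]; first by rewrite leqn0 => /eqP ->; lra.
rewrite leq_eqVlt ltnS => /orP [/eqP -> _|ab bN]; first lra.
by have := IH ab (ltnW bN); have := incr b bN; lra.
Qed.

Definition mix N (r : nat) (A B : 'I_N -> R) : 'I_N -> R :=
  fun c => if (c < r)%N then A c else B c.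

Lemma mix0 N (A B : 'I_N -> R) : mix 0 A B = B.
Proof. by apply: functional_extensionality => c; rewrite /mix ltn0. Qed.

Lemma mixN N (A B : 'I_N -> R) : mix N A B = A.
Proof. by apply: functional_extensionality => c; rewrite /mix ltn_ord. Qed.

Lemma mix_upd_succ N (c : 'I_N) (A B : 'I_N -> R) : mix c.+1 A B = upd (mix c A B) c (A c).
Proof.
apply: functional_extensionality => c'; rewrite /mix /upd ltnS leq_eqVlt val_eqE.
by case: eqP => [->|].
Qed.

Lemma mix_upd_self N (c : 'I_N) (A B : 'I_N -> R) : mix c A B = upd (mix c A B) c (B c).
Proof.
apply: functional_extensionality => c'; rewrite /mix /upd.
by case: eqP => [->|//]; rewrite ltnn.
Qed.

Lemma between_in_interval a b u s :
  0 <= a <= u -> 0 <= b <= u -> Rmin a b <= s <= Rmax a b -> 0 <= s <= u.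
Proof. by rewrite /Rmin /Rmax; case: Rle_dec; lra. Qed.

Lemma upd_in_box N (q u : 'I_N -> R) c s :
  (forall c, 0 <= q c <= u c) -> 0 <= s <= u c -> forall c', 0 <= upd q c s c' <= u c'.
Proof. by move=> q_box s_box c'; rewrite /upd; case: eqP => [->|]. Qed.

Section MonotonePath.

Variables (N : nat) (C : ('I_N -> R) -> Prop) (g : ('I_N -> R) -> R) (x x' : 'I_N -> R).
Hypotheses (x_ge0 : forall c, 0 <= x c) (x'_ge0 : forall c, 0 <= x' c).
Hypothesis box_x : forall q, (forall c, 0 <= q c <= x c) -> C q.
Hypothesis box_x' : forall q, (forall c, 0 <= q c <= x' c) -> C q.

Let y c := Rmin (x c) (x' c).

Lemma y_box c : 0 <= y c <= x c /\ 0 <= y c <= x' c.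
Proof.
have := Rmin_l (x c) (x' c); have := Rmin_r (x c) (x' c).
have := Rmin_glb _ _ _ (x_ge0 c) (x'_ge0 c); rewrite -/(y c); lra.
Qed.

Lemma down_leg_in_C (c : 'I_N) s :
  Rmin (x c) (y c) <= s <= Rmax (x c) (y c) -> C (upd (mix c y x) c s).
Proof.
move=> hs; apply: box_x; apply: upd_in_box.
- by move=> c'; have := y_box c'; have := x_ge0 c'; rewrite /mix; case: ifP; lra.
- by apply: (between_in_interval _ _ hs); have := y_box c; have := x_ge0 c; lra.
Qed.

Lemma up_leg_in_C (c : 'I_N) s :
  Rmin (y c) (x' c) <= s <= Rmax (y c) (x' c) -> C (upd (mix c x' y) c s).
Proof.
move=> hs; apply: box_x'; apply: upd_in_box.
- by move=> c'; have := y_box c'; have := x'_ge0 c'; rewrite /mix; case: ifP; lra.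
- by apply: (between_in_interval _ _ hs); have := y_box c; have := x'_ge0 c; lra.
Qed.

Lemma path_increment (c : 'I_N) :
  (x c <> x' c -> signC C g c <> SU) ->
  exists mu, 0 < mu /\
    g (mix c.+1 y x) - g (mix c y x) + (g (mix c.+1 x' y) - g (mix c x' y)) =
    mu * sval (signC C g c) * (x' c - x c).
Proof.
move=> T_neqU.
rewrite !mix_upd_succ {2}(mix_upd_self c y x) {2}(mix_upd_self c x' y).
have [xx'|ne] := Req_dec (x c) (x' c).
  by exists 1; split; [lra|rewrite /y -xx' Rmin_left; lra].
have [mu1 [mu1_gt0 ->]] := coordinate_step (T_neqU ne) (@down_leg_in_C c).
have [mu2 [mu2_gt0 ->]] := coordinate_step (T_neqU ne) (@up_leg_in_C c).
exact: split_at_min.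
Qed.

Lemma monotone_path_strict (sg : R) (c1 : 'I_N) :
  (forall c, x c <> x' c ->
     signC C g c <> SU /\ 0 <= sg * sval (signC C g c) * (x' c - x c)) ->
  0 < sg * sval (signC C g c1) * (x' c1 - x c1) ->
  0 < sg * (g x' - g x).
Proof.
move=> compat strict.
pose F r := sg * (g (mix r y x) + g (mix r x' y)).
have incr (c : 'I_N) : exists mu, 0 < mu /\
    F c.+1 - F c = mu * (sg * sval (signC C g c) * (x' c - x c)).
  have [mu [mu_gt0 E]] := path_increment (fun ne => proj1 (compat c ne)).
  exists mu; split => //; rewrite /F.
  transitivity (sg * (g (mix c.+1 y x) - g (mix c y x) +
                      (g (mix c.+1 x' y) - g (mix c x' y)))); first ring.
  by rewrite E; ring.
have step_ge0 (c : 'I_N) : F c <= F c.+1.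
  have [mu [mu_gt0 E]] := incr c.
  have : 0 <= sg * sval (signC C g c) * (x' c - x c).
    have [eq|ne] := Req_dec (x c) (x' c); last exact: (proj2 (compat c ne)).
    have -> : x' c - x c = 0 by lra.
    by rewrite Rmult_0_r; lra.
  by move=> ge0; have := Rmult_le_pos _ _ (Rlt_le _ _ mu_gt0) ge0; lra.
have : F 0%N < F N.
  have F_incr r (lt_rN : (r < N)%N) : F r <= F r.+1 by exact: (step_ge0 (Ordinal lt_rN)).
  have := nondecreasing_le F_incr (leq0n c1) (ltnW (ltn_ord c1)).
  have := nondecreasing_le F_incr (ltn_ord c1) (leqnn N).
  by have [mu [mu_gt0 E]] := incr c1; have := Rmult_lt_0_compat _ _ mu_gt0 strict; lra.
rewrite /F !mix0 !mixN.
have -> : sg * (g x' - g x) = sg * (g y + g x') - sg * (g x + g y) by ring.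
lra.
Qed.

End MonotonePath.

Lemma eliminated_coord (bb : bool) (T : sign4) (w : R) :
  (sgn4 w <> SZero -> T <> SZero -> T = smul bb (sgn4 w)) ->
  (T = SU -> sgn4 w = SZero) -> w <> 0 ->
  T <> SU /\ 0 <= bsign bb * sval T * w /\ (T <> SZero -> 0 < bsign bb * sval T * w).
Proof.
move=> compat noU w_neq0.
have v_neq0 : sgn4 w <> SZero by move/sgn4_eq0.
have strict : T <> SZero -> 0 < bsign bb * sval T * w.
  move=> T_neq0; rewrite (compat v_neq0 T_neq0) sval_smul.
  by have := sval_sgn4_mul_gt0 w_neq0; case: bb {compat} => /=; lra.
split; first by move/noU.
split=> //; case: T {compat noU} strict => strict; try (apply: Rlt_le; exact: strict).
by rewrite /= Rmult_0_r Rmult_0_l; lra.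
Qed.

Lemma eliminates_sgn4_vec N (t : 'I_N -> sign4) (w : 'I_N -> R) :
  eliminates t [ffun c => sgn4 (w c)] ->
  exists sg c1,
    (forall c, w c <> 0 -> t c <> SU /\ 0 <= sg * sval (t c) * w c) /\
    0 < sg * sval (t c1) * w c1.
Proof.
move=> [[c1 [t_c1 v_c1]] [[bb compat] noU]].
have coord c : w c <> 0 ->
    t c <> SU /\ 0 <= bsign bb * sval (t c) * w c /\
    (t c <> SZero -> 0 < bsign bb * sval (t c) * w c).
  by apply: eliminated_coord; move: (compat c) (noU c); rewrite ffunE.
have w_c1 : w c1 <> 0 by move: v_c1; rewrite ffunE => v_c1 /sgn4_eq0.
exists (bsign bb), c1; split; last exact: (proj2 (proj2 (coord c1 w_c1))).
by move=> c /coord [? [? _]].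
Qed.

Lemma first_difference N (T : Type) (x x' : 'I_N -> T) c0 :
  x c0 <> x' c0 -> exists c1, x c1 <> x' c1 /\ forall c : 'I_N, (c < c1)%N -> x c = x' c.
Proof.
move=> /pboolP ne0.
case: (@arg_minnP _ c0 (fun c => pbool (x c <> x' c)) val ne0) => c1 /pboolP ne1 c1_min.
exists c1; split=> // c lt_cc1; apply: NNPP => /pboolP /c1_min.
by rewrite leqNgt lt_cc1.
Qed.

Lemma sgn4_vec_in_S_N N (w : 'I_N -> R) (c1 : 'I_N) :
  0 < w c1 -> (forall c : 'I_N, (c < c1)%N -> w c = 0) -> [ffun c => sgn4 (w c)] \in S_N N.
Proof.
move=> w_c1 w_before; rewrite inE; apply/and3P; split.
- by apply/forallP => c; rewrite ffunE sgn4_neqU.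
- by apply/existsP; exists c1; rewrite ffunE sgn4_pos.
- apply/forallP => c; apply/implyP => /andP [v_c /forallP first_c]; rewrite ffunE.
  have [lt_cc1|lt_c1c|/val_inj ->] := ltngtP c c1; last by rewrite sgn4_pos.
  + by move: v_c; rewrite ffunE; have /sgn4_eq0 -> := w_before c lt_cc1.
  + by move/implyP: (first_c c1) => /(_ lt_c1c); rewrite ffunE sgn4_pos.
Qed.

(* The sign vector of x' - x, multiplied by the sign of its first nonzero entry. *)
Lemma normalized_sgn4_diff_in_S_N N (x x' : 'I_N -> R) c0 :
  x c0 <> x' c0 -> exists e, e <> 0 /\ [ffun c => sgn4 (e * (x' c - x c))] \in S_N N.
Proof.
move=> /first_difference [c1 [ne1 eq_before]].
exists (x' c1 - x c1); split; first lra.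
apply: (sgn4_vec_in_S_N (c1 := c1)) => [|c /eq_before ->]; first by apply: Rsqr_pos_lt; lra.
by rewrite Rminus_diag Rmult_0_r.
Qed.

Lemma phibar_ext k (n : 'I_k -> nat) m (phi : itup n -> 'I_m -> R) (t t' : bpoint n) c :
  (forall i j, t i j = t' i j) -> phibar phi t c = phibar phi t' c.
Proof.
by move=> tt'; rewrite /phibar; apply: eq_bigr => j _; congr (_ * _); apply: eq_bigr.
Qed.

Lemma f_z_chart k (n : 'I_k -> nat) m (phi : itup n -> 'I_m -> R) (z : itup n) t :
  in_interior t -> f_z phi z (chart z t) = phibar phi t.
Proof.
by move=> int_t; apply: functional_extensionality => c; exact: phibar_ext (expand_chart z int_t).
Qed.

Lemma phibar_injective_of_sensitive k (n : 'I_k -> nat) m (phi : itup n -> 'I_m -> R)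
    (z : itup n) :
  {subset S_N (Nof n) <= Sens (@Cset k n z) (f_z phi z)} ->
  forall t t' : bpoint n, in_interior t -> in_interior t' ->
    (forall c, phibar phi t c = phibar phi t' c) -> forall i j, t i j = t' i j.
Proof.
move=> sens t t' int_t int_t' same_phibar.
have expand_t := expand_chart z int_t; have expand_t' := expand_chart z int_t'.
have g_eq : f_z phi z (chart z t) = f_z phi z (chart z t').
  by rewrite !f_z_chart //; apply: functional_extensionality.
set x := chart z t in expand_t g_eq *; set x' := chart z t' in expand_t' g_eq *.
case: (classic (forall c, x c = x' c)) => [x_eq|/not_all_ex_not [c0 ne0]].
  by move=> i j; rewrite -expand_t -expand_t' (functional_extensionality _ _ x_eq).
exfalso; have [e [e_neq0 v_in_S_N]] := normalized_sgn4_diff_in_S_N ne0.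
have := sens _ v_in_S_N; rewrite inE => /andP [_ /pboolP [pi [_ elim_v]]].
have [sg [c1 [compat strict]]] := eliminates_sgn4_vec elim_v.
pose g q := pi (f_z phi z q).
have scale c : sg * e * sval (signC (Cset z) g c) * (x' c - x c) =
               sg * sval (SignC (Cset z) g c) * (e * (x' c - x c)) by rewrite /SignC; ring.
suff : 0 < sg * e * (g x' - g x) by rewrite /g g_eq; lra.
apply: (@monotone_path_strict _ (Cset z) g x x' _ _ _ _ _ c1).
- by move=> c; apply: chart_ge0.
- by move=> c; apply: chart_ge0.
- by move=> q; apply: Cset_box.
- by move=> q; apply: Cset_box.
- move=> c ne; rewrite scale; apply: compat.
  by apply: Rmult_integral_contrapositive_currified => //; lra.
- by rewrite scale.
Qed.

Lemma S_N_gt0 N (v : {ffun 'I_N -> sign4}) : v \in S_N N -> (0 < N)%N.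
Proof. by rewrite inE => /and3P [_ /existsP [i _] _]; exact: leq_ltn_trans (ltn_ord i). Qed.

Lemma eliminates_self N (v : {ffun 'I_N -> sign4}) : v \in S_N N -> eliminates v v.
Proof.
rewrite inE => /and3P [/forallP v_neqU /existsP [i v_i] _].
split; first by exists i; split; apply/eqP.
split; first by exists true.
by move=> i' v_i'; move: (v_neqU i'); rewrite v_i'.
Qed.

Lemma subset_of_Elim_setD_eq0 N (X : {set {ffun 'I_N -> sign4}}) :
  Elim (S_N N :\: X) = set0 -> {subset S_N N <= X}.
Proof.
move=> Elim0 v v_in; apply/negPn/negP => v_notin.
have : v \in Elim (S_N N :\: X).
  rewrite inE v_in; apply/pboolP; exists v; split; last exact: eliminates_self.
  by rewrite inE v_notin.
by rewrite Elim0 inE.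
Qed.

Lemma Rmax_big_attained (I : finType) (F : I -> R) :
  \big[Rmax/0]_(i : I) F i = 0 \/ exists i, \big[Rmax/0]_(i : I) F i = F i.
Proof.
apply: (big_ind (fun y => y = 0 \/ exists i, y = F i)); first by left.
- by move=> a b ha hb; rewrite /Rmax; case: Rle_dec.
- by move=> i _; right; exists i.
Qed.

Lemma log3_eq_INR y N : (0 < N)%N -> log3 y = INR N -> y = 3 ^ N.
Proof.
move=> N_gt0; rewrite /log3.
have ln3_gt0 : 0 < ln 3 by rewrite -ln_1; apply: ln_increasing; lra.
have INR_gt0 : 0 < INR N by apply: lt_0_INR; apply/ltP.
case: (Rlt_le_dec 0 y) => [y_gt0 E|y_le0].
  apply: ln_inv => //; first by apply: pow_lt; lra.
  by rewrite ln_pow; [rewrite -E; field; lra|lra].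
have -> : ln y = 0.
  by unfold ln; case: Rlt_dec => // y_gt0; exfalso; lra.
by rewrite /Rdiv Rmult_0_l; lra.
Qed.

Lemma cs_eq_N_sensitive k (n : 'I_k -> nat) m (phi : itup n -> 'I_m -> R) :
  cs phi = INR (Nof n) -> itup n ->
  exists z, {subset S_N (Nof n) <= Sens (@Cset k n z) (f_z phi z)}.
Proof.
move=> cs_N z0; have [N0|N_gt0] := posnP (Nof n).
  by exists z0 => v /S_N_gt0 /lt0n_neq0 /eqP.
have INR_gt0 : 0 < INR (Nof n) by apply: lt_0_INR; apply/ltP.
have [cs0|[z cs_z_N]] : cs phi = 0 \/ exists z, cs phi = cs_z phi z :=
  Rmax_big_attained (cs_z phi).
  by rewrite cs0 in cs_N; lra.
exists z; apply: subset_of_Elim_setD_eq0; apply/eqP; rewrite -cards_eq0; apply/eqP.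
have twice_eq0 (a c : R) : a - 2 * c = a -> c = 0 by lra.
apply: INR_eq; apply: twice_eq0 (3 ^ Nof n) _ _.
exact: log3_eq_INR N_gt0 (etrans (esym cs_z_N) cs_N).
Qed.

Theorem corollary3p2 (k : nat) (n : 'I_k -> nat) (m : nat)
  (phi : itup n -> 'I_m -> R) :
  cs phi = INR (Nof n) ->
  forall t t' : bpoint n, in_interior t -> in_interior t' ->
    (forall c, phibar phi t c = phibar phi t' c) ->
    forall i j, t i j = t' i j.
Proof.
move=> cs_N t t' int_t int_t'.
have [z sens] := cs_eq_N_sensitive cs_N [ffun i => Ordinal (interior_n_gt0 int_t i)].
exact: phibar_injective_of_sensitive sens t t' int_t int_t'.
Qed.
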